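(* For all integers $J\geq 0$ and $N\geq 0$, $\mathfrak{m}_{\mathrm{odd}}(0,2J+1;36N+r)\equiv 0\pmod 4$ for $r\in\{21,33\}$.
   Context: For $a\in\{-2,-1,0,1,2\}$ and integer $t\geq0$, the integers $\mathfrak{m}_{\mathrm{odd}}(a,t;n)$ are defined by $\sum_{n\geq0}\mathfrak{m}_{\mathrm{odd}}(a,t;n)q^n=\sum\prod_{k=1}^t\frac{q^{n_k}}{1+aq^{n_k}+q^{2n_k}}$, the sum running over all $t$-tuples of odd positive integers $n_1<n_2<\cdots<n_t$ (for $t=0$ the series is $1$). *)

From mathcomp Require Import all_boot all_order all_algebra.
Set Implicit Arguments. Unset Strict Implicit. Unset Printing Implicit Defensive.
Import Order.TTheory GRing.Theory Num.Theory.
Local Open Scope ring_scope.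

(* Formal power series in q with integer coefficients: coefficient functions. *)
Definition ps := nat -> int.

Definition ps_one : ps := fun n => (n == 0)%N%:R.
Definition ps_mon (m : nat) : ps := fun n => (n == m)%N%:R.
Definition ps_mul (f g : ps) : ps := fun n => \sum_(i < n.+1) f i * g (n - i)%N.

(* Coefficients 0..n of the multiplicative inverse of a series f with
   constant term f 0 = 1:  g 0 = 1,  g m = - sum_{j=1}^m f j * g (m-j). *)
Fixpoint ps_inv_seq (f : ps) (n : nat) : seq int :=
  match n with
  | 0 => [:: 1]
  | n'.+1 => let s := ps_inv_seq f n' in
             rcons s (- \sum_(k < n'.+1) f k.+1 * nth 0 s (n' - k)%N)
  end.
Definition ps_inv (f : ps) : ps := fun n => nth 0 (ps_inv_seq f n) n.

Definition denom (a : int) (m : nat) : ps :=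
  fun i => (i == 0)%N%:R + a * (i == m)%N%:R + (i == m.*2)%N%:R.
Definition factor (a : int) (m : nat) : ps := ps_mul (ps_mon m) (ps_inv (denom a m)).

(* m_odd(a,t;n): coefficient of q^n in the sum, over t-tuples of odd positive
   integers n_1 < ... < n_t (equivalently t-element sets of odd integers),
   of prod_k q^{n_k}/(1+a q^{n_k}+q^{2 n_k}).  Only tuples with all n_k <= n
   can contribute to the coefficient of q^n, so the sum is restricted to
   subsets of {0,...,n}. *)
Definition m_odd (a : int) (t n : nat) : int :=
  \sum_(S : {set 'I_n.+1} | (#|S| == t) && [forall i in S, odd i])
     (\big[ps_mul/ps_one]_(i in S) factor a i) n.

From mathcomp Require Import all_boot all_order all_algebra.
From mathcomp Require Import zify ring.
Set Implicit Arguments. Unset Strict Implicit. Unset Printing Implicit Defensive.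
Import Order.TTheory GRing.Theory Num.Theory.
Local Open Scope ring_scope.

(* Let G(z, q) = prod_(i odd) (1 + z q^i / (1 + q^(2i))) be the generating function of
   m_odd(0, t; n), so that G * prod_(i odd) (1 + q^(2i)) = prod_(i odd) (1 + z q^i + q^(2i)).
   Writing z = x + 1/x, the Jacobi triple product turns this product times
   prod_m (1 - q^(2m)) into the theta series sum_j x^j q^(j^2), which is supported on squares.
   The same identity at x = -1, q := q^4, combined with elementary manipulations of Euler
   products, gives prod_(i odd) (1 + q^(2i)) * prod_m (1 - q^(2m)) = 1 + 2u with
   u = sum_(s >= 1) (-1)^s q^(4 s^2).  Hence G (1 + 2u) is supported on squares: at a
   non-square n we get G_n = -2 (G u)_n, and when n is not of the form m^2 + 4 s^2 every
   G_i occurring in (G u)_n sits again at a non-square, so G_n = 4 (...).  Finally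
   36N + 21 and 36N + 33 are 3 or 6 mod 9, which m^2 + 4 s^2 never is.  Everything is done modulo q^(n+1), with x^j replaced by a solution of
   z a(j) = a(j+1) + a(j-1), a(0) = 1, so that only polynomials in z occur. *)

Lemma sumr_ord_widen (R : nmodType) (F : nat -> R) n n' : (n <= n')%N ->
  (forall i, (n <= i)%N -> F i = 0) -> \sum_(i < n') F i = \sum_(i < n) F i.
Proof.
move=> le_nn' F0; rewrite -(subnKC le_nn') big_split_ord /= [X in _ + X]big1 ?addr0 //.
by move=> i _; apply: F0; rewrite leq_addr.
Qed.

Lemma sumr_ord_recl (R : nmodType) (F : nat -> R) n :
  \sum_(i < n.+1) F i = F 0%N + \sum_(i < n) F i.+1.
Proof. by rewrite big_ord_recl; under eq_bigr do rewrite lift0. Qed.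

Lemma sum_absz_sym (R : nmodType) (g : nat -> R) K :
  \sum_(i < (2 * K).+1) g `|i - K|%N = g 0%N + (\sum_(j < K) g j.+1) *+ 2.
Proof.
elim: K => [|K IHK]; first by rewrite big_ord1 big_ord0 mul0rn [RHS]addr0.
have -> : (2 * K.+1).+1 = (2 * K).+3 by lia.
rewrite (sumr_ord_recl (fun i => g `|i - K.+1|%N)) big_ord_recr /= subn0.
have shift (i : 'I_(2 * K).+1) : g `|i.+1 - K.+1|%N = g `|i - K|%N by congr g; lia.
have -> : `|(2 * K).+2 - K.+1|%N = K.+1 by lia.
rewrite (eq_bigr _ (fun i _ => shift i)) IHK big_ord_recr /= mulrnDl mulr2n.
by rewrite addrCA -!addrA.
Qed.

Lemma prodr_ord_double (R : comPzRingType) (F : nat -> R) n :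
  \prod_(m < 2 * n) F m = \prod_(k < n) F (2 * k)%N * \prod_(k < n) F (2 * k).+1.
Proof.
elim: n => [|n IHn]; first by rewrite !big_ord0 mulr1.
have -> : (2 * n.+1 = (2 * n).+2)%N by lia.
by rewrite !big_ord_recr /= IHn; ring.
Qed.

Lemma prodr_ord_odd (R : comPzRingType) (F : nat -> R) n :
  \prod_(i < n | odd i) F i = \prod_(k < n./2) F (2 * k).+1.
Proof.
elim: n => [|n IHn]; first by rewrite !big_ord0.
rewrite big_mkcond big_ord_recr /= -big_mkcond IHn uphalf_half.
case: (boolP (odd n)) => [odd_n|]; last by rewrite mulr1.
rewrite add1n big_ord_recr /=.
by have -> : (2 * n./2).+1 = n by rewrite -[RHS]odd_double_half odd_n add1n mul2n.
Qed.

(** * Congruences modulo an element of a commutative ring *)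

Section Congruence.
Variable R : comPzRingType.
Implicit Types m a b c d x : R.

Definition eqmod m a b := exists x, a = b + m * x.

Lemma eqmod_refl m a : eqmod m a a.
Proof. by exists 0; rewrite mulr0 addr0. Qed.

Lemma eqmod_sym m a b : eqmod m a b -> eqmod m b a.
Proof. by case=> x ->; exists (- x); rewrite mulrN addrK. Qed.

Lemma eqmod_trans m a b c : eqmod m a b -> eqmod m b c -> eqmod m a c.
Proof. by case=> x -> [y ->]; exists (y + x); rewrite mulrDr addrA. Qed.

Lemma eqmodD m a b c d : eqmod m a b -> eqmod m c d -> eqmod m (a + c) (b + d).
Proof. by case=> x -> [y ->]; exists (x + y); ring. Qed.

Lemma eqmodM m a b c d : eqmod m a b -> eqmod m c d -> eqmod m (a * c) (b * d).
Proof. by case=> x -> [y ->]; exists (b * y + x * d + m * x * y); ring. Qed.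

Lemma eqmodMl m a b c : eqmod m a b -> eqmod m (c * a) (c * b).
Proof. exact/eqmodM/eqmod_refl. Qed.

Lemma eqmodMr m a b c : eqmod m a b -> eqmod m (a * c) (b * c).
Proof. by move/eqmodM; apply; apply: eqmod_refl. Qed.

Lemma eqmod_dvd m k a b : eqmod (m * k) a b -> eqmod m a b.
Proof. by case=> x ->; exists (k * x); rewrite mulrA. Qed.

Lemma eqmod_sum I r (P : pred I) m (F G : I -> R) :
  (forall i, P i -> eqmod m (F i) (G i)) ->
  eqmod m (\sum_(i <- r | P i) F i) (\sum_(i <- r | P i) G i).
Proof. by move=> FG; apply: big_ind2 => //; [apply: eqmod_refl | apply: eqmodD]. Qed.

Lemma eqmod_prod I r (P : pred I) m (F G : I -> R) :
  (forall i, P i -> eqmod m (F i) (G i)) ->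
  eqmod m (\prod_(i <- r | P i) F i) (\prod_(i <- r | P i) G i).
Proof. by move=> FG; apply: big_ind2 => //; [apply: eqmod_refl | apply: eqmodM]. Qed.

Lemma eqmod_prod1 I r (P : pred I) m (F : I -> R) :
  (forall i, P i -> eqmod m (F i) 1) -> eqmod m (\prod_(i <- r | P i) F i) 1.
Proof. by move/(eqmod_prod r); rewrite big1_eq. Qed.

Lemma eqmod_prod_widen m (F : nat -> R) n n' : (n <= n')%N ->
  (forall i, (n <= i)%N -> eqmod m (F i) 1) ->
  eqmod m (\prod_(i < n') F i) (\prod_(i < n) F i).
Proof.
move=> le_nn' F1; rewrite -(subnKC le_nn') big_split_ord /=.
rewrite -[X in eqmod _ _ X]mulr1; apply/eqmodMl/eqmod_prod1 => i _.
by apply: F1; rewrite leq_addr.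
Qed.

Section PowerModulus.
Variables (q : R) (M : nat).

Lemma eqmod_expW N a b : (M <= N)%N -> eqmod (q ^+ N) a b -> eqmod (q ^+ M) a b.
Proof. by move=> le_MN; rewrite -(subnKC le_MN) exprD => /eqmod_dvd. Qed.

Lemma eqmod_mulX0 x e : (M <= e)%N -> eqmod (q ^+ M) (x * q ^+ e) 0.
Proof.
by move=> le_Me; exists (x * q ^+ (e - M)); rewrite add0r mulrCA -exprD subnKC.
Qed.

Lemma eqmod_addX y x e : (M <= e)%N -> eqmod (q ^+ M) (y + x * q ^+ e) y.
Proof.
move=> le_Me; rewrite -[X in eqmod _ _ X]addr0.
exact/eqmodD/eqmod_mulX0/le_Me/eqmod_refl.
Qed.

Lemma eqmod_1subX e : (M <= e)%N -> eqmod (q ^+ M) (1 - q ^+ e) 1.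
Proof. by rewrite -mulN1r; apply: eqmod_addX. Qed.

Lemma eqmod_prod_odd n (F : nat -> R) : (M./2 <= n)%N ->
  (forall i, (M <= i)%N -> eqmod (q ^+ M) (F i) 1) ->
  eqmod (q ^+ M) (\prod_(i < M | odd i) F i) (\prod_(k < n) F (2 * k).+1).
Proof.
move=> le_Mn F1; rewrite prodr_ord_odd.
apply/eqmod_sym/(eqmod_prod_widen (F := fun k => F (2 * k).+1)) => // k le_Mk.
by apply: F1; have := odd_double_half M; lia.
Qed.

End PowerModulus.
End Congruence.

Lemma eqmod_rmorph (R S : comPzRingType) (f : {rmorphism R -> S}) m a b :
  eqmod m a b -> eqmod (f m) (f a) (f b).
Proof. by case=> x ->; exists (f x); rewrite rmorphD rmorphM. Qed.

Lemma eqmod_XnP (R : comNzRingType) (p r : {poly R}) M :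
  (forall k, (k < M)%N -> p`_k = r`_k) <-> eqmod 'X^M p r.
Proof.
split=> [pr|[c ->] k lt_kM]; last by rewrite coefD coefXnM lt_kM addr0.
have take0 : take_poly M (p - r) = 0.
  apply/polyP => k; rewrite coef_take_poly coef0 coefB.
  by case: ltnP => // /pr ->; rewrite subrr.
exists (drop_poly M (p - r)); rewrite mulrC.
by have := poly_take_drop M (p - r); rewrite take0 add0r => ->; rewrite addrC subrK.
Qed.

(** * Euler products and Gaussian binomial coefficients *)

Section EulerProduct.
Variable R : comPzRingType.
Implicit Type x : R.

Definition euler x M := \prod_(m < M) (1 - x ^+ m.+1).

Lemma euler_split x M :
  eqmod (x ^+ M) (euler x M) (\prod_(k < M) (1 - x ^+ (2 * k).+1) * euler (x ^+ 2) M).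
Proof.
apply: eqmod_trans (_ : eqmod _ _ (euler x (2 * M))) _.
  apply/eqmod_sym; apply: (eqmod_prod_widen (F := fun m => 1 - x ^+ m.+1)).
    by rewrite leq_pmull.
  by move=> m le_Mm; apply: eqmod_1subX; rewrite leqW.
rewrite [euler x _](prodr_ord_double (fun m => 1 - x ^+ m.+1)); apply: eqmodMl.
rewrite /euler (eq_bigr (fun k : 'I_M => 1 - (x ^+ 2) ^+ k.+1)); first exact: eqmod_refl.
by move=> k _; rewrite -exprM mulnS.
Qed.

Lemma euler_odd_eqmod x M :
  eqmod (x ^+ M) (\prod_(k < M) (1 + x ^+ (2 * k).+1) * euler x M)
    (\prod_(k < M) (1 - (x ^+ 2) ^+ (2 * k).+1) ^+ 2 * euler ((x ^+ 2) ^+ 2) M).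
Proof.
apply: eqmod_trans (eqmodMl _ (euler_split x M)) _.
rewrite mulrA -big_split prodrXl [X in eqmod _ _ (X * _)]expr2 -mulrA /=.
rewrite (eq_bigr (fun k : 'I_M => 1 - (x ^+ 2) ^+ (2 * k).+1)); last first.
  move=> k _; have -> : (x ^+ 2) ^+ (2 * k).+1 = (x ^+ (2 * k).+1) ^+ 2.
    by rewrite -!exprM mulnC.
  by ring.
apply/eqmodMl/(eqmod_expW (N := 2 * M)); first by rewrite leq_pmull.
by rewrite exprM; apply: euler_split.
Qed.

Variable Q : R.

Fixpoint qbinom n i :=
  match n, i with
  | _, 0 => 1
  | 0, _.+1 => 0
  | n'.+1, i'.+1 => qbinom n' i'.+1 + Q ^+ (n' - i') * qbinom n' i'
  end.

Lemma qbinom0 n : qbinom n 0 = 1.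
Proof. by case: n. Qed.

Lemma qbinomS n i : qbinom n.+1 i.+1 = qbinom n i.+1 + Q ^+ (n - i) * qbinom n i.
Proof. by []. Qed.

Lemma qbinom_small n i : (n < i)%N -> qbinom n i = 0.
Proof. by elim: n i => [|n IHn] [|i] //= lt_ni; rewrite !IHn ?mulr0 ?addr0 //; lia. Qed.

Lemma qbinom_ratio n i :
  qbinom n i.+1 * (1 - Q ^+ i.+1) = qbinom n i * (1 - Q ^+ (n - i)).
Proof.
elim: n i => [|n IHn] [|i] /=; rewrite ?mul0r ?sub0n ?subrr ?mulr0 //.
  by rewrite !qbinom0 mulrDl IHn qbinom0 !subn0 (exprSr Q n); ring.
rewrite subSS !mulrDl (IHn i.+1) -!mulrA -(IHn i).
have [lt_in|le_ni] := ltnP i n; last by rewrite (@qbinom_small n i.+1) ?ltnS ?mul0r ?mulr0.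
have expE j : (j <= n)%N -> Q ^+ (n - j) * Q ^+ j.+1 = Q ^+ n.+1.
  by move=> le_jn; rewrite -exprD; congr (_ ^+ _); lia.
transitivity (qbinom n i.+1 * (1 - Q ^+ n.+1)).
  by rewrite -(expE i.+1 lt_in); ring.
by rewrite -(expE i (ltnW lt_in)); ring.
Qed.

Lemma qbinomSr n i : qbinom n.+1 i.+1 = Q ^+ i.+1 * qbinom n i.+1 + qbinom n i.
Proof.
apply/eqP; rewrite qbinomS -subr_eq0; apply/eqP.
by rewrite -[RHS](subrr (qbinom n i * (1 - Q ^+ (n - i)))) -{1}qbinom_ratio; ring.
Qed.

Lemma qbinomSS n i :
  qbinom n.+2 i.+2 = qbinom n i.+1 * (1 + Q ^+ n.+1) + qbinom n i * Q ^+ (n - i)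
                     + qbinom n i.+2 * Q ^+ i.+2.
Proof.
rewrite qbinomSr !qbinomS.
have [lt_ni|le_in] := ltnP n i.+1.
  by rewrite (qbinom_small lt_ni) (@qbinom_small n i.+2) ?mulr0 ?mul0r //; [ring | lia].
have -> : Q ^+ n.+1 = Q ^+ i.+2 * Q ^+ (n - i.+1) by rewrite -exprD; congr (_ ^+ _); lia.
by ring.
Qed.

Lemma qbinom_euler n i : qbinom n i * euler Q i = \prod_(m < i) (1 - Q ^+ (n - m)).
Proof.
elim: i => [|i IHi]; first by rewrite /euler !big_ord0 qbinom0 mulr1.
by rewrite /euler !big_ord_recr /= mulrCA qbinom_ratio mulrA [_ * qbinom n i]mulrC -IHi.
Qed.

Lemma qbinom_euler_eqmod M n i : (M <= i)%N -> (M <= n - i)%N ->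
  eqmod (Q ^+ M) (qbinom n i * euler Q M) 1.
Proof.
move=> le_Mi le_M_ni; apply: eqmod_trans (_ : eqmod _ _ (qbinom n i * euler Q i)) _.
  apply/eqmodMl/eqmod_sym; apply: (eqmod_prod_widen (F := fun m => 1 - Q ^+ m.+1)) => //.
  by move=> m le_Mm; apply: eqmod_1subX; rewrite leqW.
rewrite qbinom_euler; apply: eqmod_prod1 => m _.
by apply: eqmod_1subX; apply: leq_trans le_M_ni _; apply: leq_sub2l; rewrite ltnW.
Qed.

End EulerProduct.

(** * A finite Jacobi triple product *)

Section JacobiTripleProduct.
Variables (R : comPzRingType) (q : R).

(* The coefficient of x^(i - K) in prod_(k < K) (1 + x q^(2k+1)) (1 + x^-1 q^(2k+1)). *)
Definition jt_coef K i := qbinom (q ^+ 2) (2 * K) i * q ^+ (`|i - K| ^ 2).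

Lemma jt_coef_small K i : (2 * K < i)%N -> jt_coef K i = 0.
Proof. by move=> lt_Ki; rewrite /jt_coef qbinom_small ?mul0r. Qed.

Lemma jt_coef0 K : jt_coef K.+1 0 = jt_coef K 0 * q ^+ (2 * K + 1).
Proof. by rewrite /jt_coef !qbinom0 !mul1r -exprD; congr (_ ^+ _); nia. Qed.

Lemma jt_coef1 K :
  jt_coef K.+1 1 = jt_coef K 0 * (1 + q ^+ (4 * K + 2)) + jt_coef K 1 * q ^+ (2 * K + 1).
Proof.
rewrite /jt_coef mulnS qbinomSr qbinomS !qbinom0 subn0.
have -> : (`|1 - K.+1| = `|0 - K|)%N by lia.
have e1 : q ^+ (`|1 - K| ^ 2) * q ^+ (2 * K + 1) = q ^+ 2 * q ^+ (`|0 - K| ^ 2).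
  by rewrite -!exprD; congr (_ ^+ _); nia.
have e2 : q ^+ (4 * K + 2) = (q ^+ 2) ^+ (2 * K) * q ^+ 2.
  by rewrite -exprM -exprD; congr (_ ^+ _); lia.
ring: e1 e2.
Qed.

Lemma jt_coefSS K i :
  jt_coef K.+1 i.+2 = jt_coef K i.+1 * (1 + q ^+ (4 * K + 2))
                      + (jt_coef K i + jt_coef K i.+2) * q ^+ (2 * K + 1).
Proof.
rewrite /jt_coef mulnS qbinomSS.
have -> : (`|i.+2 - K.+1| = `|i.+1 - K|)%N by lia.
have e2 : qbinom (q ^+ 2) (2 * K) i * (q ^+ 2) ^+ (2 * K - i) * q ^+ (`|i.+1 - K| ^ 2)
          = qbinom (q ^+ 2) (2 * K) i * (q ^+ (`|i - K| ^ 2) * q ^+ (2 * K + 1)).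
  have [le_iK|lt_Ki] := leqP i (2 * K); last by rewrite qbinom_small ?mul0r.
  by rewrite -mulrA -exprM -!exprD; congr (_ * _ ^+ _); nia.
have e3 : (q ^+ 2) ^+ i.+2 * q ^+ (`|i.+1 - K| ^ 2)
          = q ^+ (`|i.+2 - K| ^ 2) * q ^+ (2 * K + 1).
  by rewrite -exprM -!exprD; congr (_ ^+ _); nia.
have e4 : q ^+ (4 * K + 2) = (q ^+ 2) ^+ (2 * K).+1.
  by rewrite -exprM; congr (_ ^+ _); lia.
by rewrite -e4 !mulrDl e2 -[_ * (q ^+ 2) ^+ i.+2 * _]mulrA e3; ring.
Qed.

Variables (z : R) (a : int -> R).
Hypothesis a_rec : forall j, z * a j = a (j + 1) + a (j - 1).

Lemma jacobi_triple_finite K :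
  \prod_(k < K) (1 + z * q ^+ (2 * k + 1) + q ^+ (4 * k + 2)) * a 0
  = \sum_(i < (2 * K).+1) jt_coef K i * a (i%:Z - K%:Z).
Proof.
elim: K => [|K IHK]; first by rewrite big_ord0 big_ord1 /jt_coef qbinom0 !mul1r.
rewrite big_ord_recr mulrAC IHK big_distrl /=.
set c := q ^+ (2 * K + 1); set d := 1 + q ^+ (4 * K + 2).
pose u1 i := jt_coef K i * d * a (i%:Z - K%:Z).
pose u2 i := jt_coef K i * c * a (i%:Z - K%:Z + 1).
pose u3 i := jt_coef K i * c * a (i%:Z - K%:Z - 1).
have -> : \sum_(i < (2 * K).+1) jt_coef K i * a (i%:Z - K%:Z) * (1 + z * c + q ^+ (4 * K + 2))
          = \sum_(i < (2 * K).+1) (u1 i + u2 i + u3 i).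
  by apply: eq_bigr => i _; have E := a_rec (i%:Z - K%:Z); rewrite /u1 /u2 /u3 /d; ring: E.
have u1_small i : (2 * K < i)%N -> u1 i = 0 by move=> ?; rewrite /u1 jt_coef_small ?mul0r.
have u3_small i : (2 * K < i)%N -> u3 i = 0 by move=> ?; rewrite /u3 jt_coef_small ?mul0r.
rewrite !big_split /= -(@sumr_ord_widen _ u1 (2 * K).+1 (2 * K).+2) //.
rewrite -(@sumr_ord_widen _ u3 (2 * K).+1 (2 * K).+3 (leqW (leqnSn _))) //.
rewrite (sumr_ord_recl u1) (sumr_ord_recl u3) (sumr_ord_recl (fun i => u3 i.+1)).
pose v i := jt_coef K.+1 i * a (i%:Z - K.+1%:Z).
have v0 : v 0%N = u3 0%N.
  by rewrite /v /u3 jt_coef0 (_ : 0%:Z - K.+1%:Z = 0%:Z - K%:Z - 1) //; lia.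
have v1 : v 1%N = u1 0%N + u3 1%N.
  rewrite /v /u1 /u3 jt_coef1 (_ : 1%:Z - K.+1%:Z = 0%:Z - K%:Z) ?mulrDl; last by lia.
  by rewrite (_ : 1%:Z - K%:Z - 1 = 0%:Z - K%:Z) //; lia.
have vSS i : v i.+2 = u1 i.+1 + u2 i + u3 i.+2.
  rewrite /v /u1 /u2 /u3 jt_coefSS (_ : i.+2%:Z - K.+1%:Z = i.+1%:Z - K%:Z); last by lia.
  rewrite (_ : i%:Z - K%:Z + 1 = i.+1%:Z - K%:Z); last by lia.
  by rewrite (_ : i.+2%:Z - K%:Z - 1 = i.+1%:Z - K%:Z); [rewrite /c /d; ring | lia].
have -> : (2 * K.+1 = (2 * K).+2)%N by lia.
rewrite (sumr_ord_recl v) (sumr_ord_recl (fun i => v i.+1)) v0 v1.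
under [in RHS]eq_bigr do rewrite vSS.
by rewrite !big_split /=; ring.
Qed.

Lemma jacobi_triple_eqmod M K : (2 * M <= K)%N ->
  eqmod (q ^+ M)
    (\prod_(k < K) (1 + z * q ^+ (2 * k + 1) + q ^+ (4 * k + 2)) * a 0 * euler (q ^+ 2) M)
    (\sum_(i < (2 * K).+1) a (i%:Z - K%:Z) * q ^+ (`|i - K| ^ 2)).
Proof.
move=> le_2MK; rewrite jacobi_triple_finite big_distrl; apply: eqmod_sum => i _.
rewrite /= /jt_coef; set e := (`|i - K| ^ 2)%N; set b := qbinom _ _ _.
have -> : b * q ^+ e * a (i%:Z - K%:Z) * euler (q ^+ 2) M
          = b * euler (q ^+ 2) M * (a (i%:Z - K%:Z) * q ^+ e) by ring.
have [le_Me|lt_eM] := leqP M e.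
  rewrite mulrA; apply: eqmod_trans (eqmod_mulX0 _ _ le_Me) _.
  exact/eqmod_sym/eqmod_mulX0.
rewrite -[X in eqmod _ _ X]mul1r; apply/eqmodMr/(eqmod_expW (N := 2 * M)).
  by rewrite leq_pmull.
by rewrite exprM; apply: qbinom_euler_eqmod; rewrite /e in lt_eM; nia.
Qed.

End JacobiTripleProduct.

Section ThreeTermRecurrence.
Variable R : comPzRingType.

Lemma sign_absz_rec (j : int) :
  - 2%:R * (-1) ^+ `|j| = (-1) ^+ `|j + 1| + (-1) ^+ `|j - 1| :> R.
Proof.
have signS (k : int) : (-1) ^+ `|k + 1| = - (-1) ^+ `|k| :> R.
  case: k => n; first by rewrite (_ : absz (n%:Z + 1) = n.+1) ?exprS ?mulN1r //; lia.
  by rewrite (_ : absz (Negz n + 1) = n) ?NegzE /= ?exprS ?mulN1r ?opprK //; lia.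
by rewrite signS -{1 2}(subrK 1 j) signS; ring.
Qed.

Lemma theta_eqmod (q : R) M K : (2 * M <= K)%N ->
  eqmod (q ^+ M) (\prod_(k < M) (1 - q ^+ (2 * k).+1) ^+ 2 * euler (q ^+ 2) M)
    (1 + (\sum_(j < K) (-1) ^+ j.+1 * q ^+ (j.+1 ^ 2)) *+ 2).
Proof.
move=> le_2MK.
have := @jacobi_triple_eqmod R q (- 2%:R) (fun j => (-1) ^+ `|j|) (@sign_absz_rec) M K le_2MK.
rewrite (sum_absz_sym (fun d => (-1) ^+ d * q ^+ (d ^ 2))) expr0 mul1r mulr1.
apply: eqmod_trans; apply: eqmodMr.
rewrite (eq_bigr (fun k : 'I_K => (1 - q ^+ (2 * k).+1) ^+ 2)); last first.
  move=> k _; have -> : q ^+ (4 * k + 2) = (q ^+ (2 * k).+1) ^+ 2.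
    by rewrite -exprM; congr (_ ^+ _); lia.
  by rewrite addn1; ring.
apply/eqmod_sym/(eqmod_prod_widen (F := fun k => (1 - q ^+ (2 * k).+1) ^+ 2)).
  by apply: leq_trans le_2MK; rewrite leq_pmull.
move=> k le_Mk; rewrite -[X in eqmod _ _ X](expr1n _ 2).
by apply: eqmodM; apply: eqmod_1subX; lia.
Qed.

Variable z : R.

(* cheb n.+1 = U_n(z/2), the Chebyshev polynomials of the second kind *)
Fixpoint cheb n :=
  match n with
  | 0 => 0
  | 1 => 1
  | (m.+1 as n').+1 => z * cheb n' - cheb m
  end.

(* With z = x + 1/x this is (x^(j+1) - x^(-j-1)) / (x - 1/x); it replaces x^j in the
   triple product. *)
Definition cheb_int (j : int) :=
  match j with Posz n => cheb n.+1 | Negz n => - cheb n end.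

Lemma cheb_int0 : cheb_int 0 = 1.
Proof. by []. Qed.

Lemma cheb_int_rec j : z * cheb_int j = cheb_int (j + 1) + cheb_int (j - 1).
Proof.
case: j => [[|n]|[|n]].
- by rewrite /= mulr1 subr0 oppr0 addr0.
- have -> : n.+1%:Z + 1 = n.+2%:Z by lia.
  have -> : n.+1%:Z - 1 = n%:Z by lia.
  by rewrite /=; ring.
- by rewrite /= oppr0 mulr0 subrr.
have -> : Negz n.+1 + 1 = Negz n by lia.
have -> : Negz n.+1 - 1 = Negz n.+2 by lia.
by rewrite /=; ring.
Qed.

End ThreeTermRecurrence.

(** * Truncated power series *)

Definition ps_trunc M (f : ps) : {poly int} := \poly_(k < M) f k.

Lemma coef_ps_trunc M f k : (k < M)%N -> (ps_trunc M f)`_k = f k.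
Proof. by move=> lt_kM; rewrite coef_poly lt_kM. Qed.

Lemma size_ps_inv_seq f n : size (ps_inv_seq f n) = n.+1.
Proof. by elim: n => //= n IHn; rewrite size_rcons IHn. Qed.

Lemma nth_ps_inv_seq f n m : (m <= n)%N -> nth 0 (ps_inv_seq f n) m = ps_inv f m.
Proof.
elim: n => [|n IHn] le_mn; first by case: m le_mn.
rewrite /= nth_rcons size_ps_inv_seq; case: ltnP => [/IHn//|le_Sm].
have -> : m = n.+1 by apply/eqP; rewrite eqn_leq le_mn.
by rewrite eqxx /ps_inv /= nth_rcons size_ps_inv_seq ltnn eqxx.
Qed.

Lemma ps_invS f n : ps_inv f n.+1 = - \sum_(k < n.+1) f k.+1 * ps_inv f (n - k)%N.
Proof.
rewrite {1}/ps_inv [ps_inv_seq f n.+1]/= nth_rcons size_ps_inv_seq ltnn eqxx.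
by congr (- _); apply: eq_bigr => k _; rewrite nth_ps_inv_seq ?leq_subr.
Qed.

Lemma ps_mul_inv f : f 0%N = 1 -> forall n, ps_mul f (ps_inv f) n = ps_one n.
Proof.
move=> f0 [|n]; first by rewrite /ps_mul big_ord1 f0 mul1r.
rewrite /ps_mul big_ord_recl f0 mul1r subn0 ps_invS addrC; apply/eqP; rewrite subr_eq0.
by apply/eqP/eq_bigr => i _; rewrite lift0 subSS.
Qed.

Section Truncation.
Variable M : nat.

Lemma ps_trunc_mul f g : eqmod 'X^M (ps_trunc M (ps_mul f g)) (ps_trunc M f * ps_trunc M g).
Proof.
apply/eqmod_XnP => k lt_kM; rewrite coef_ps_trunc // coefM.
by apply: eq_bigr => -[i le_ik] _ /=; rewrite !coef_ps_trunc //; lia.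
Qed.

Lemma ps_trunc_one : eqmod 'X^M (ps_trunc M ps_one) 1.
Proof. by apply/eqmod_XnP => k lt_kM; rewrite coef_ps_trunc // coef1. Qed.

Lemma ps_trunc_mon m : eqmod 'X^M (ps_trunc M (ps_mon m)) 'X^m.
Proof. by apply/eqmod_XnP => k lt_kM; rewrite coef_ps_trunc // coefXn. Qed.

Lemma ps_trunc_prod (I : finType) (P : pred I) (F : I -> ps) :
  eqmod 'X^M (ps_trunc M (\big[ps_mul/ps_one]_(i | P i) F i))
             (\prod_(i | P i) ps_trunc M (F i)).
Proof.
apply: (big_ind2 (fun f p => eqmod 'X^M (ps_trunc M f) p)); first exact: ps_trunc_one.
  by move=> f1 p1 f2 p2 e1 e2; apply: eqmod_trans (ps_trunc_mul _ _) (eqmodM e1 e2).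
by move=> i _; apply: eqmod_refl.
Qed.

Lemma ps_trunc_mul_inv f : f 0%N = 1 ->
  eqmod 'X^M (ps_trunc M f * ps_trunc M (ps_inv f)) 1.
Proof.
move=> f0; apply: eqmod_trans (eqmod_sym (ps_trunc_mul _ _)) _.
apply: eqmod_trans ps_trunc_one; apply/eqmod_XnP => k lt_kM.
by rewrite !coef_ps_trunc // ps_mul_inv.
Qed.

Lemma ps_trunc_factor0 m : (0 < m)%N ->
  eqmod 'X^M (ps_trunc M (factor 0 m) * (1 + 'X^(2 * m))) 'X^m.
Proof.
move=> m_gt0; set d := denom 0 m.
have d0 : d 0%N = 1.
  rewrite /d /denom mul0r addr0 (_ : (0 == m.*2) = false) ?addr0 //.
  by apply/negbTE; rewrite eq_sym double_eq0 -lt0n.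
have dE : eqmod 'X^M (ps_trunc M d) (1 + 'X^(2 * m)).
  apply/eqmod_XnP => k lt_kM; rewrite coef_ps_trunc // /d /denom mul0r addr0 -mul2n.
  by rewrite coefD coef1 coefXn.
have e := eqmodM (eqmod_trans (ps_trunc_mul (ps_mon m) (ps_inv d))
                   (eqmodMr _ (ps_trunc_mon m))) (eqmod_sym dE).
apply: eqmod_trans e _; rewrite -mulrA -[X in eqmod _ _ X]mulr1; apply: eqmodMl.
by rewrite mulrC; apply: ps_trunc_mul_inv.
Qed.

End Truncation.

(** * Sums of a square and four times a square *)

Lemma coef_mul4_theta (R : comNzRingType) (G H u : {poly R}) M N : (N < M)%N ->
  eqmod 'X^M (G * (1 + u *+ 2)) H ->
  (forall a, H`_a != 0 -> exists m, a = (m ^ 2)%N) ->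
  (forall b, u`_b != 0 -> exists2 s, (0 < s)%N & b = (4 * s ^ 2)%N) ->
  (forall m s, N <> (m ^ 2 + 4 * s ^ 2)%N) ->
  exists c, G`_N = c *+ 4.
Proof.
move=> lt_NM /eqmod_XnP GH H_sq u_sq N_nrep.
have G_nonsq a : (a <= N)%N -> (forall m, a <> (m ^ 2)%N) -> G`_a = - ((G * u)`_a *+ 2).
  move=> le_aN a_nsq; have Ha0 : H`_a = 0.
    by apply/eqP; apply: contraT => /H_sq[m /a_nsq].
  have := GH a (leq_ltn_trans le_aN lt_NM).
  by rewrite mulrDr mulr1 mulrnAr coefD coefMn Ha0 => /eqP; rewrite addr_eq0 => /eqP.
have Gu_N : (G * u)`_N = (\sum_(i < N.+1) - (G * u)`_i * u`_(N - i)) *+ 2.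
  rewrite coefM -sumrMnl; apply: eq_bigr => -[i le_iN] _ /=.
  have [->|/u_sq[s s_gt0 Ns]] := eqVneq u`_(N - i) 0; first by rewrite !mulr0 mul0rn.
  rewrite G_nonsq // => [|m im]; first by rewrite !mulNr mulrnAl mulNrn.
  by apply: (N_nrep m s); rewrite -im -Ns subnKC.
exists (- \sum_(i < N.+1) - (G * u)`_i * u`_(N - i)).
rewrite G_nonsq // => [|m Nm]; first by rewrite Gu_N mulNrn -mulrnA.
by apply: (N_nrep m 0); rewrite Nm muln0 addn0.
Qed.

Lemma sq_add_4sq_mod9 m s : ((m ^ 2 + 4 * s ^ 2) %% 9 \notin [:: 3; 6])%N.
Proof.
rewrite {1}(divn_eq m 9) {1}(divn_eq s 9); set a := (m %/ 9)%N; set b := (s %/ 9)%N.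
have := ltn_pmod m (isT : 0 < 9)%N; have := ltn_pmod s (isT : 0 < 9)%N.
move: (m %% 9)%N (s %% 9)%N => x y lty ltx.
have -> : ((a * 9 + x) ^ 2 + 4 * (b * 9 + y) ^ 2
          = (a * (a * 9 + 2 * x) + 4 * b * (b * 9 + 2 * y)) * 9 + (x ^ 2 + 4 * y ^ 2))%N.
  by nia.
rewrite modnMDl.
by do 9?[case: x ltx => [|x] ltx //]; do 9?[case: y lty => [|y] lty //].
Qed.

Lemma sq_add_4sq_neq k r m s :
  r \in [:: 21; 33]%N -> (36 * k + r <> m ^ 2 + 4 * s ^ 2)%N.
Proof.
move=> r_in E; have := sq_add_4sq_mod9 m s.
rewrite -E (_ : 36 * k = k * 4 * 9)%N ?modnMDl; last by lia.
by move: r_in; rewrite !inE => /orP[] /eqP -> /negP; apply.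
Qed.

(** * The generating function of m_odd *)

(* Series in q with coefficients polynomials in z: the outer variable is q, and z is the
   constant polynomial zC. *)
Local Notation zC := ('X%:P : {poly {poly int}}).

Definition modd_series M : {poly {poly int}} :=
  \prod_(i < M) ((if odd i then zC * (ps_trunc M (factor 0 i))^:P else 0) + 1).

Definition theta_tail K : {poly {poly int}} :=
  \sum_(j < K) (-1) ^+ j.+1 * 'X^4 ^+ (j.+1 ^ 2).

Definition cheb_theta K : {poly {poly int}} :=
  \sum_(i < (2 * K).+1) (cheb_int 'X (i%:Z - K%:Z))%:P * 'X ^+ (`|i - K| ^ 2).

Lemma m_odd_coef n t : m_odd 0 t n = ((modd_series n.+1)`_n)`_t.
Proof.
rewrite /modd_series bigA_distr !coef_sum /m_odd big_mkcond /=.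
apply: eq_bigr => S _; rewrite -big_mkcond /=.
have [S_odd|] := boolP [forall i in S, odd i]; last first.
  case/forall_inPn => i iS even_i; rewrite andbF.
  by rewrite (bigD1 i) //= (negbTE even_i) mul0r !coef0.
have -> : \prod_(i in S) (if odd i then zC * (ps_trunc n.+1 (factor 0 i))^:P else 0)
          = ('X ^+ #|S|)%:P * (\prod_(i in S) ps_trunc n.+1 (factor 0 i))^:P.
  rewrite rmorph_prod rmorphXn -prodr_const -big_split /=.
  by apply: eq_bigr => i iS; rewrite (forall_inP S_odd i iS).
rewrite coefCM coef_map /= coefXnM coefC andbT.
have /eqmod_XnP <- // := ps_trunc_prod n.+1 (mem S) (factor 0).
rewrite coef_ps_trunc //.
by case: (ltngtP t #|S|) => [lt_tS|lt_St|->]; rewrite ?subnn ?eqxx // subn_eq0 leqNgt lt_St.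
Qed.

Lemma modd_series_mul_denom M :
  eqmod 'X^M (modd_series M * \prod_(i < M | odd i) (1 + 'X^(2 * i)))
    (\prod_(i < M | odd i) (1 + zC * 'X^i + 'X^(2 * i))).
Proof.
rewrite /modd_series [X in _ * X]big_mkcond [X in eqmod _ _ X]big_mkcond -big_split /=.
apply: eqmod_prod => i _; case: ifP => odd_i; last first.
  by rewrite add0r mul1r; apply: eqmod_refl.
have := eqmod_rmorph (map_poly polyC) (ps_trunc_factor0 M (odd_gt0 odd_i)).
rewrite rmorphM rmorphD /= rmorph1 !map_polyXn => e.
have -> : 1 + zC * 'X^i + 'X^(2 * i) = zC * 'X^i + (1 + 'X^(2 * i)) by ring.
rewrite mulrDl mul1r -mulrA; apply: eqmodD (eqmod_refl _ _).
exact: eqmodMl.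
Qed.

Lemma theta_odd_eqmod M K : (2 * M <= K)%N ->
  eqmod 'X^M (\prod_(i < M | odd i) (1 + 'X^(2 * i)) * euler 'X^2 M)
    (1 + theta_tail K *+ 2).
Proof.
move=> le_2MK.
have odd_prod : eqmod 'X^M (\prod_(i < M | odd i) (1 + 'X^(2 * i)))
                  (\prod_(k < M) (1 + ('X^2) ^+ (2 * k).+1) : {poly {poly int}}).
  under [X in eqmod _ _ X]eq_bigr do rewrite -exprM.
  apply: (eqmod_prod_odd (F := fun i => 1 + 'X^(2 * i))) => [|i le_Mi].
    by rewrite -divn2 leq_div.
  by rewrite -['X^(2 * i)]mul1r; apply: eqmod_addX; lia.
have eo := euler_odd_eqmod ('X^2 : {poly {poly int}}) M.
have X4 : ('X^2) ^+ 2 = 'X^4 :> {poly {poly int}} by rewrite -exprM.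
rewrite -[_ ^+ M]exprM X4 in eo.
have th := theta_eqmod ('X^4 : {poly {poly int}}) le_2MK.
rewrite -[_ ^+ M]exprM in th.
apply: eqmod_trans (eqmodMr _ odd_prod) _.
apply: eqmod_trans (eqmod_expW (N := 2 * M) _ eo) _; first by rewrite leq_pmull.
by apply: (eqmod_expW (N := 4 * M)) th; rewrite leq_pmull.
Qed.

Lemma modd_series_theta M K : (2 * M <= K)%N ->
  eqmod 'X^M (modd_series M * (1 + theta_tail K *+ 2)) (cheb_theta K).
Proof.
move=> le_2MK.
have cheb_rec j :
    zC * (cheb_int 'X j)%:P = (cheb_int 'X (j + 1))%:P + (cheb_int 'X (j - 1))%:P.
  by rewrite -polyCM -polyCD cheb_int_rec.
have jt := @jacobi_triple_eqmod _ 'X _ _ cheb_rec M K le_2MK.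
rewrite cheb_int0 polyC1 mulr1 in jt.
apply: eqmod_trans (eqmodMl _ (eqmod_sym (theta_odd_eqmod le_2MK))) _.
rewrite mulrA; apply: eqmod_trans (eqmodMr _ (modd_series_mul_denom M)) _.
apply: eqmod_trans jt; apply: eqmodMr.
apply: eqmod_trans
  (eqmod_prod_odd (F := fun i => 1 + zC * 'X^i + 'X^(2 * i)) (n := K) _ _) _.
- by rewrite -divn2 (leq_trans (leq_div _ _)) // (leq_trans _ le_2MK) // leq_pmull.
- move=> i le_Mi; rewrite -['X^(2 * i)]mul1r.
  apply: eqmod_trans (_ : eqmod _ _ (1 + zC * 'X^i)) _; apply: eqmod_addX => //.
  by apply: leq_trans le_Mi _; rewrite leq_pmull.
rewrite (eq_bigr (fun k : 'I_K => 1 + zC * 'X ^+ (2 * k + 1) + 'X ^+ (4 * k + 2))).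
  exact: eqmod_refl.
by move=> k _; rewrite addn1; congr (_ + _ ^+ _); lia.
Qed.

Lemma cheb_theta_sq K a : (cheb_theta K)`_a != 0 -> exists m, a = (m ^ 2)%N.
Proof.
have [i /eqP -> _|none] := pickP (fun i : 'I_(2 * K).+1 => a == (`|i - K| ^ 2)%N).
  by exists `|i - K|%N.
rewrite /cheb_theta coef_sum big1 ?eqxx // => i _.
by rewrite coefCM coefXn none mulr0.
Qed.

Lemma theta_tail_sq K b :
  (theta_tail K)`_b != 0 -> exists2 s, (0 < s)%N & b = (4 * s ^ 2)%N.
Proof.
have [j /eqP -> _|none] := pickP (fun j : 'I_K => b == (4 * j.+1 ^ 2)%N).
  by exists j.+1.
rewrite /theta_tail coef_sum big1 ?eqxx // => j _.
rewrite -signr_odd -exprM; case: odd; rewrite ?expr1 ?expr0 ?mulN1r ?mul1r ?coefN coefXn none.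
  by rewrite oppr0.
by [].
Qed.

Theorem mainTheorem15 (J N r : nat) :
  r \in [:: 21%N; 33%N] ->
  (4 %| m_odd 0 (2 * J + 1)%N (36 * N + r)%N)%Z.
Proof.
move=> r_in; set n := (36 * N + r)%N; rewrite m_odd_coef.
have [c ->] := coef_mul4_theta (ltnSn n) (modd_series_theta (leqnn (2 * n.+1)))
  (@cheb_theta_sq _) (@theta_tail_sq _) (fun m s => @sq_add_4sq_neq N r m s r_in).
by apply/dvdzP; exists c`_(2 * J + 1); rewrite coefMn mulr_natr.
Qed.
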